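(* Let $\mathbb{L}=(\mathcal{P},\mathcal{C},\parallel)$ be a Laguerre plane satisfying axioms (C) and (S). An automorphism $\sigma$ of $\mathbb{L}$ is a Laguerre symmetry if and only if $\sigma=\mathrm{S}_{\{K,L\}}$ for some circles $K,L$ with $|K\cap L|=2$.
   Context: A Laguerre plane is a triple $(\mathcal{P},\mathcal{C},\parallel)$ where $\mathcal{P}$ is a set of points, $\mathcal{C}\subset 2^{\mathcal{P}}$ a set of circles and $\parallel$ an equivalence relation on $\mathcal{P}$ (parallelism; its classes are called generators) such that: (1) any three pairwise non-parallel points lie on a unique circle; (2) for every circle $K$ and non-parallel points $p\in K$, $q\notin K$ there is exactly one circle $L$ with $q\in L$ and $K\cap L=\{p\}$; (3) for every point $p$ and circle $K$ there is exactly one point $q\in K$ with $q\parallel p$; (4) some circle contains at least three but not all points. Circles $K,L$ are tangent at $p$ if $K\cap L=\{p\}$ or $K=L$ (with $p\in K$); they are tangent if tangent at some point. For $p\in K$, $\langle p,K\rangle$ denotes the set of circles tangent to $K$ at $p$. Axiom (C): for any circles $K,L$ and any point $p\in K\setminus L$ there exists exactly one circle $M\in\langle p,K\rangle$ with $|M\cap L|=1$. Axiom (S): if $K,L,M,N$ are circles and $a,b,c,d$ points with $K\cap L=\{a\}$, $L\cap M=\{b\}$, $M\cap N=\{c\}$, $N\cap K=\{d\}$ and $a\nparallel c$, then there is a circle containing $a,b,c,d$. Notation: for distinct circles $K,L$ and $x\in K\setminus L$, let $M$ be the unique circle of $\langle x,K\rangle$ with $|M\cap L|=1$; then $xKL$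 is the unique point of $M\cap L$; for $x\in K\cap L$, $xKL:=x$. An automorphism is a bijection of $\mathcal{P}$ mapping the set of circles onto itself; involutory means its square is the identity. For non-tangent circles $K,L$, the double tangency symmetry $\mathrm{S}_{\{K,L\}}$ is the unique involutory automorphism $\phi$ such that $\phi(x)=xKL$ for all $x\in K$ and $\phi(M)=M$ whenever $x$ is a point with $\phi(x)\neq x$ and $M$ is a circle containing $x$ and $\phi(x)$ (such $\phi$ exists and is unique in planes satisfying (C) and (S)). A Laguerre symmetry is an involutory automorphism for which there exist two distinct generators $X,Y$ and a circle $M$ such that it fixes every point of $X\cup Y$ and maps $M$ onto itself, but does not fix $M$ pointwise. *)

(* Point sets are predicates P -> Prop; circles are such
   predicates, the set of circles is C : (P -> Prop) -> Prop.  Equality of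
   circles is Leibniz equality of predicates (extensional by funext/propext). *)
Set Implicit Arguments.

Section Laguerre.
Variable P : Type.
Variable C : (P -> Prop) -> Prop.
Variable par : P -> P -> Prop.

Definition inter (A B : P -> Prop) : P -> Prop := fun x => A x /\ B x.
Definition single (p : P) : P -> Prop := fun x => x = p.
Definition pair2 (a b : P) : P -> Prop := fun x => x = a \/ x = b.
Definition image (f : P -> P) (A : P -> Prop) : P -> Prop :=
  fun y => exists x, A x /\ f x = y.

Definition card1 (A : P -> Prop) : Prop := exists p, A = single p.
Definition card2 (A : P -> Prop) : Prop :=
  exists a b, a <> b /\ A = pair2 a b.

Definition tangent_at (K L : P -> Prop) (p : P) : Prop :=
  K p /\ L p /\ (inter K L = single p \/ K = L).
Definition tangent (K L : P -> Prop) : Prop := exists p, tangent_at K L p.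

Definition pencil (p : P) (K : P -> Prop) : (P -> Prop) -> Prop :=
  fun M => C M /\ tangent_at M K p.

Definition laguerre_plane : Prop :=
  (forall x, par x x) /\ (forall x y, par x y -> par y x) /\
  (forall x y z, par x y -> par y z -> par x z) /\
  (* circles are subsets of P: automatic *)
  (forall a b c, ~ par a b -> ~ par b c -> ~ par a c ->
     exists K, C K /\ K a /\ K b /\ K c /\
       forall K', C K' -> K' a -> K' b -> K' c -> K' = K) /\
  (forall K p q, C K -> K p -> ~ K q -> ~ par p q ->
     exists L, (C L /\ L q /\ inter K L = single p) /\
       forall L', C L' -> L' q -> inter K L' = single p -> L' = L) /\
  (forall p K, C K -> exists q, (K q /\ par q p) /\
       forall q', K q' -> par q' p -> q' = q) /\
  (exists K, C K /\ (exists a b c, K a /\ K b /\ K c /\ a <> b /\ b <> c /\ a <> c)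
     /\ exists x, ~ K x).

Definition axiom_C : Prop :=
  forall K L p, C K -> C L -> K p -> ~ L p ->
    exists M, (pencil p K M /\ card1 (inter M L)) /\
      forall M', pencil p K M' -> card1 (inter M' L) -> M' = M.

Definition axiom_S : Prop :=
  forall K L M N a b c d, C K -> C L -> C M -> C N ->
    inter K L = single a -> inter L M = single b ->
    inter M N = single c -> inter N K = single d -> ~ par a c ->
    exists O, C O /\ O a /\ O b /\ O c /\ O d.

(* xKL_rel K L x y : y = xKL (for x in K) *)
Definition xKL_rel (K L : P -> Prop) (x y : P) : Prop :=
  (K x /\ L x /\ y = x) \/
  (K x /\ ~ L x /\ exists M, pencil x K M /\ inter M L = single y).

Definition automorphism (f : P -> P) : Prop :=
  (forall x y, f x = f y -> x = y) /\ (forall y, exists x, f x = y) /\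
  (forall K, C K -> C (image f K)) /\
  (forall L, C L -> exists K, C K /\ image f K = L).

Definition involutory (f : P -> P) : Prop := forall x, f (f x) = x.

(* phi is the double tangency symmetry S_{K,L} (K, L distinct non-tangent
   circles); in planes with (C) and (S) it is unique. *)
Definition is_double_tangency_symmetry (K L : P -> Prop) (phi : P -> P) : Prop :=
  C K /\ C L /\ K <> L /\ ~ tangent K L /\
  automorphism phi /\ involutory phi /\
  (forall x, K x -> xKL_rel K L x (phi x)) /\
  (forall x M, phi x <> x -> C M -> M x -> M (phi x) -> image phi M = M).

Definition generator (x : P) : P -> Prop := fun y => par x y.

Definition laguerre_symmetry (s : P -> P) : Prop :=
  automorphism s /\ involutory s /\
  exists x y, generator x <> generator y /\
    (forall z, generator x z \/ generator y z -> s z = z) /\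
    exists M, C M /\ image s M = M /\ exists z, M z /\ s z <> z.

End Laguerre.

(* If sigma is a Laguerre symmetry fixing the generators of x1 and y1, then
   every circle T through a moved point x and its image also meets the fixed
   generator of x1, so x, sigma x and that fixed point pin T down and sigma T = T.
   Hence any circle K with sigma K <> K meets sigma K exactly in its two points
   on the fixed generators, and for x in K the circle touching K at x through
   sigma x is sigma-invariant and touches sigma K at sigma x: sigma is the
   double tangency symmetry of K and sigma K.  Conversely, a double tangency
   symmetry S_{K,L} with K and L meeting in a and b fixes every point z on the
   generators of a and b: the circle through z, a moved point x of K and its
   image is invariant, and sigma z lies on it and on the generator of z. *)
From Stdlib Require Import Classical FunctionalExtensionality PropExtensionality.
Set Implicit Arguments.

Section LaguerrePlane.
Variable P : Type.
Variable C : (P -> Prop) -> Prop.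
Variable par : P -> P -> Prop.
Hypothesis HL : laguerre_plane C par.

Lemma pred_ext (A B : P -> Prop) : (forall x, A x <-> B x) -> A = B.
Proof.
  intro H; apply functional_extensionality; intro x.
  apply propositional_extensionality, H.
Qed.

Lemma inter_comm (K L : P -> Prop) : inter K L = inter L K.
Proof. apply pred_ext; unfold inter; tauto. Qed.

Lemma par_refl x : par x x.
Proof. destruct HL as (H & _); apply H. Qed.

Lemma par_sym x y : par x y -> par y x.
Proof. destruct HL as (_ & H & _); apply H. Qed.

Lemma par_trans x y z : par x y -> par y z -> par x z.
Proof. destruct HL as (_ & _ & H & _); apply H. Qed.

Lemma circle_through3 a b c : ~ par a b -> ~ par b c -> ~ par a c ->
  exists K, C K /\ K a /\ K b /\ K c /\
    forall K', C K' -> K' a -> K' b -> K' c -> K' = K.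
Proof. destruct HL as (_ & _ & _ & H & _); apply H. Qed.

Lemma circle_touching K p q : C K -> K p -> ~ K q -> ~ par p q ->
  exists L, C L /\ L q /\ inter K L = single p.
Proof.
  destruct HL as (_ & _ & _ & _ & H & _); intros HK Kp nKq npq.
  destruct (H K p q HK Kp nKq npq) as [L [HLq _]]; exists L; exact HLq.
Qed.

Lemma circle_meets_generator p K : C K -> exists q, K q /\ par q p.
Proof.
  destruct HL as (_ & _ & _ & _ & _ & H & _); intro HK.
  destruct (H p K HK) as [q [Hq _]]; exists q; exact Hq.
Qed.

Lemma circle_par_eq K a b : C K -> K a -> K b -> par a b -> a = b.
Proof.
  destruct HL as (_ & _ & _ & _ & _ & H & _); intros HK Ka Kb pab.
  destruct (H b K HK) as [q [_ Hu]].
  rewrite (Hu a Ka pab), (Hu b Kb (par_refl b)); reflexivity.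
Qed.

Lemma circle_eq3 K K' a b c : C K -> C K' ->
  K a -> K b -> K c -> K' a -> K' b -> K' c ->
  ~ par a b -> ~ par b c -> ~ par a c -> K = K'.
Proof.
  intros HK HK' Ka Kb Kc K'a K'b K'c nab nbc nac.
  destruct (circle_through3 nab nbc nac) as [O (_ & _ & _ & _ & HO)].
  rewrite (HO K HK Ka Kb Kc), (HO K' HK' K'a K'b K'c); reflexivity.
Qed.

Lemma circle_eq K L : C K -> C L -> (forall z, K z -> L z) -> K = L.
Proof.
  intros HK HLc HKL; apply pred_ext; intro z; split; [apply HKL|intro Lz].
  destruct (circle_meets_generator z HK) as [k [Kk pkz]].
  rewrite <- (circle_par_eq HLc (HKL k Kk) Lz pkz); exact Kk.
Qed.

Lemma exists_nonpar_triple : exists K a b c,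
  C K /\ K a /\ K b /\ K c /\ ~ par a b /\ ~ par b c /\ ~ par a c /\
  exists x, ~ K x.
Proof.
  destruct HL as (_ & _ & _ & _ & _ & _ & H).
  destruct H as [K [HK [[a [b [c (Ka & Kb & Kc & ab & bc & ac)]]] Hx]]].
  exists K, a, b, c; repeat split; auto; intro Hp;
    [apply ab|apply bc|apply ac]; eapply circle_par_eq; eauto.
Qed.

(* Pigeonhole: each of u, v is parallel to at most one of a, b, c. *)
Lemma nonpar_triple_escape a b c u v :
  ~ par a b -> ~ par b c -> ~ par a c ->
  exists p, (p = a \/ p = b \/ p = c) /\ ~ par p u /\ ~ par p v.
Proof.
  intros nab nbc nac.
  assert (one_par : forall x y w, ~ par x y -> ~ (par x w /\ par y w))
    by (intros x y w nxy [hx hy]; eauto using par_sym, par_trans).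
  pose proof (one_par _ _ u nab); pose proof (one_par _ _ v nab).
  pose proof (one_par _ _ u nbc); pose proof (one_par _ _ v nbc).
  pose proof (one_par _ _ u nac); pose proof (one_par _ _ v nac).
  destruct (classic (par a u)), (classic (par a v)),
    (classic (par b u)), (classic (par b v));
    first [exists a; tauto | exists b; tauto | exists c; tauto].
Qed.

Lemma exists_nonpar2 u v : exists p, ~ par p u /\ ~ par p v.
Proof.
  destruct exists_nonpar_triple as (K & a & b & c & _ & _ & _ & _ & nab & nbc & nac & _).
  destruct (nonpar_triple_escape u v nab nbc nac) as [p [_ Hp]]; exists p; exact Hp.
Qed.

Lemma circle_through2 u v : ~ par u v -> exists T, C T /\ T u /\ T v.
Proof.
  intro nuv; destruct (exists_nonpar2 u v) as [p [pu pv]].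
  destruct (circle_through3 (a := u) (b := v) (c := p)) as [T (HT & Tu & Tv & _)];
    eauto using par_sym.
Qed.

Lemma exists_circle_avoiding v : exists L, C L /\ ~ L v.
Proof.
  destruct exists_nonpar_triple
    as (K & a & b & c & HK & Ka & Kb & Kc & nab & nbc & nac & [x nKx]).
  destruct (classic (K v)) as [Kv|nKv]; [|exists K; auto].
  destruct (nonpar_triple_escape v x nab nbc nac) as [p [Hp [npv npx]]].
  assert (Kp : K p) by (destruct Hp as [->|[->| ->]]; assumption).
  destruct (circle_touching HK Kp nKx npx) as [L (HLc & _ & HKL)].
  exists L; split; [exact HLc|intro Lv].
  assert (Hv : inter K L v) by (split; assumption).
  rewrite HKL in Hv; unfold single in Hv; subst; apply npv, par_refl.
Qed.

Lemma generator_nontrivial v : exists w, par w v /\ w <> v.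
Proof.
  destruct (exists_circle_avoiding v) as [L [HLc nLv]].
  destruct (circle_meets_generator v HLc) as [w [Lw pwv]].
  exists w; split; [exact pwv|intro; subst; contradiction].
Qed.

Lemma generator_eq_par x y : generator par x = generator par y <-> par x y.
Proof.
  split.
  - intro e; assert (Hy : generator par y y) by apply par_refl.
    rewrite <- e in Hy; exact Hy.
  - intro pxy; apply pred_ext; intro z; unfold generator; split;
      eauto using par_sym, par_trans.
Qed.

Lemma pair_not_tangent (K L : P -> Prop) a b :
  K <> L -> a <> b -> inter K L = pair2 a b -> ~ tangent K L.
Proof.
  intros nKL nab HKL [t (_ & _ & [Ht|Ht])]; [|contradiction].
  rewrite HKL in Ht; apply nab.
  assert (ea : single t a) by (rewrite <- Ht; left; reflexivity).
  assert (eb : single t b) by (rewrite <- Ht; right; reflexivity).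
  unfold single in ea, eb; congruence.
Qed.

(* [w] is a second point on the generator of [sigma z0], so [sigma z0] and
   [w] cannot both lie on [K]. *)
Lemma exists_noninvariant_circle (sigma : P -> P) z0 :
  ~ par z0 (sigma z0) -> exists K, C K /\ image sigma K <> K.
Proof.
  intro nz0.
  destruct (generator_nontrivial (sigma z0)) as [w [pw nw]].
  destruct (circle_through2 (u := z0) (v := w)) as [K (HK & Kz0 & Kw)];
    [intro h; eauto using par_sym, par_trans|].
  exists K; split; [exact HK|intro e].
  assert (Ksz0 : K (sigma z0)) by (rewrite <- e; exists z0; auto).
  exact (nw (circle_par_eq HK Kw Ksz0 pw)).
Qed.

Section Automorphism.
Variable s : P -> P.
Hypothesis Haut : automorphism C s.

Lemma aut_circle K : C K -> C (image s K).
Proof. destruct Haut as (_ & _ & H & _); apply H. Qed.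

Lemma aut_par a b : par a b -> par (s a) (s b).
Proof.
  destruct Haut as (inj & _ & _ & pre); intro pab.
  apply NNPP; intro N.
  destruct (classic (a = b)) as [<-|nab]; [apply N, par_refl|].
  destruct (circle_through2 N) as [T (HT & Ta & Tb)].
  destruct (pre T HT) as [K [HK <-]].
  destruct Ta as [x [Kx ex]]; destruct Tb as [y [Ky ey]].
  apply inj in ex; apply inj in ey; subst.
  exact (nab (circle_par_eq HK Kx Ky pab)).
Qed.

End Automorphism.

Section Involution.
Variable s : P -> P.
Hypothesis Haut : automorphism C s.
Hypothesis Hinv : involutory s.

Lemma image_invol K y : image s K y <-> K (s y).
Proof.
  split.
  - intros [x [Kx <-]]; rewrite Hinv; exact Kx.
  - intro Ksy; exists (s y); split; [exact Ksy|apply Hinv].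
Qed.

Lemma moved_image x : s x <> x -> s (s x) <> s x.
Proof. rewrite Hinv; auto. Qed.

Lemma inter_image_pair K a b : C K -> image s K <> K ->
  K a -> K b -> s a = a -> s b = b -> ~ par a b ->
  inter K (image s K) = pair2 a b.
Proof.
  intros HK nKi Ka Kb sa sb nab.
  assert (Ia : image s K a) by (apply image_invol; rewrite sa; exact Ka).
  assert (Ib : image s K b) by (apply image_invol; rewrite sb; exact Kb).
  apply pred_ext; intro z; unfold inter, pair2; split.
  - intros [Kz Iz]; apply NNPP; intro nz; apply nKi; symmetry.
    apply (circle_eq3 (a := a) (b := b) (c := z)); auto using aut_circle;
      intro h; apply nz; [right|left]; symmetry; eapply circle_par_eq; eauto.
  - intros [->| ->]; auto.
Qed.

Section FixedGenerator.
Variable x1 : P.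
Hypothesis Hfix : forall z, par x1 z -> s z = z.

Lemma moved_not_par_fixed x : s x <> x -> ~ par x1 x.
Proof. intros nx h; exact (nx (Hfix h)). Qed.

Lemma circle_invariant T x : C T -> T x -> T (s x) -> s x <> x -> image s T = T.
Proof.
  intros HT Tx Tsx nx.
  destruct (circle_meets_generator x1 HT) as [p [Tp ppx1]].
  assert (sp : s p = p) by (apply Hfix, par_sym, ppx1).
  symmetry; apply (circle_eq3 (a := x) (b := s x) (c := p)); auto using aut_circle.
  - apply image_invol; exact Tsx.
  - apply image_invol; rewrite Hinv; exact Tx.
  - apply image_invol; rewrite sp; exact Tp.
  - intro h; exact (nx (eq_sym (circle_par_eq HT Tx Tsx h))).
  - intro h; apply (moved_not_par_fixed (moved_image nx)).
    eauto using par_sym, par_trans.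
  - intro h; apply (moved_not_par_fixed nx); eauto using par_sym, par_trans.
Qed.

Section MovedPoint.
Variable z0 : P.
Hypothesis Hz0 : ~ par z0 (s z0).

Lemma moved_nonpar x : s x <> x -> ~ par x (s x).
Proof.
  intros nx pxsx.
  assert (nz0 : s z0 <> z0) by (intro e; rewrite e in Hz0; apply Hz0, par_refl).
  assert (nxz0 : ~ par x z0).
  { intro h; pose proof (aut_par Haut h); eauto using par_sym, par_trans. }
  assert (nxsz0 : ~ par x (s z0)).
  { intro h; pose proof (aut_par Haut h) as h'; rewrite Hinv in h'.
    eauto using par_sym, par_trans. }
  destruct (circle_through3 nxz0 Hz0 nxsz0) as [T (HT & Tx & Tz0 & Tsz0 & _)].
  assert (Tsx : T (s x)).
  { rewrite <- (circle_invariant HT Tz0 Tsz0 nz0); apply image_invol.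
    rewrite Hinv; exact Tx. }
  exact (nx (eq_sym (circle_par_eq HT Tx Tsx pxsx))).
Qed.

Lemma image_xKL K a b x : C K -> inter K (image s K) = pair2 a b ->
  s a = a -> s b = b -> K x -> xKL_rel C K (image s K) x (s x).
Proof.
  intros HK HKi sa sb Kx.
  assert (fix_inter : forall y, K y -> image s K y -> s y = y).
  { intros y Ky Iy; assert (Hy : inter K (image s K) y) by (split; assumption).
    rewrite HKi in Hy; destruct Hy as [->| ->]; assumption. }
  destruct (classic (image s K x)) as [Ix|nIx]; [left; auto|right].
  assert (nx : s x <> x) by (intro e; apply nIx, image_invol; rewrite e; exact Kx).
  assert (nKsx : ~ K (s x)).
  { intro Ksx; apply (moved_image nx), fix_inter; [exact Ksx|].
    apply image_invol; rewrite Hinv; exact Kx. }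
  destruct (circle_touching HK Kx nKsx (moved_nonpar nx)) as [T (HT & Tsx & HKT)].
  assert (Tx : T x).
  { assert (Hx : single x x) by reflexivity; rewrite <- HKT in Hx; apply Hx. }
  pose proof (circle_invariant HT Tx Tsx nx) as HTi.
  split; [exact Kx|split; [exact nIx|exists T; split]].
  - repeat split; auto; left; rewrite inter_comm; exact HKT.
  - apply pred_ext; intro y; unfold inter, single; split.
    + intros [Ty Iy].
      assert (Hsy : inter K T (s y)).
      { split; [apply image_invol, Iy|].
        rewrite <- HTi in Ty; apply image_invol in Ty; exact Ty. }
      rewrite HKT in Hsy; unfold single in Hsy.
      rewrite <- Hsy, Hinv; reflexivity.
    + intros ->; split; [exact Tsx|exists x; auto].
Qed.

Lemma dts_of_noninvariant_circle y1 K :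
  (forall z, par y1 z -> s z = z) -> ~ par x1 y1 -> C K -> image s K <> K ->
  card2 (inter K (image s K)) /\ is_double_tangency_symmetry C K (image s K) s.
Proof.
  intros Hfy nx1y1 HK nKi.
  destruct (circle_meets_generator x1 HK) as [a [Ka pa]].
  destruct (circle_meets_generator y1 HK) as [b [Kb pb]].
  assert (sa : s a = a) by (apply Hfix, par_sym, pa).
  assert (sb : s b = b) by (apply Hfy, par_sym, pb).
  assert (nab : ~ par a b) by (intro h; eauto using par_sym, par_trans).
  assert (nab' : a <> b) by (intros ->; apply nab, par_refl).
  pose proof (inter_image_pair HK nKi Ka Kb sa sb nab) as HKi.
  split; [exists a, b; auto|].
  refine (conj HK (conj (aut_circle Haut HK)
            (conj (fun e => nKi (eq_sym e)) (conj _ (conj Haut (conj Hinv (conj _ _))))))).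
  - exact (pair_not_tangent (fun e => nKi (eq_sym e)) nab' HKi).
  - intros x Kx; exact (image_xKL x HK HKi sa sb Kx).
  - intros x M nx HM Mx Msx; exact (circle_invariant HM Mx Msx nx).
Qed.

End MovedPoint.
End FixedGenerator.
End Involution.

Lemma dts_of_laguerre_symmetry s : laguerre_symmetry C par s ->
  exists K L, C K /\ C L /\ card2 (inter K L) /\ is_double_tangency_symmetry C K L s.
Proof.
  intros [Haut [Hinv [x1 [y1 [Hgen [Hfix [M [HM [HMi [z0 [Mz0 nz0]]]]]]]]]]].
  assert (Msz0 : M (s z0)) by (rewrite <- HMi; exists z0; auto).
  assert (Hz0 : ~ par z0 (s z0))
    by (intro h; exact (nz0 (eq_sym (circle_par_eq HM Mz0 Msz0 h)))).
  assert (nx1y1 : ~ par x1 y1) by (intro h; apply Hgen, generator_eq_par, h).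
  destruct (exists_noninvariant_circle s Hz0) as [K [HK nKi]].
  destruct (@dts_of_noninvariant_circle s Haut Hinv
              x1 (fun z h => Hfix z (or_introl h)) z0 Hz0
              y1 K (fun z h => Hfix z (or_intror h)) nx1y1 HK nKi) as [Hcard Hdts].
  exists K, (image s K); auto using aut_circle.
Qed.

Section DoubleTangency.
Variables K L : P -> Prop.
Variable phi : P -> P.
Hypothesis Hphi : is_double_tangency_symmetry C K L phi.

Lemma dts_fixes_inter t : K t -> L t -> phi t = t.
Proof.
  destruct Hphi as (_ & _ & _ & _ & _ & _ & Hx & _); intros Kt Lt.
  destruct (Hx t Kt) as [(_ & _ & e)|(_ & nLt & _)]; [exact e|contradiction].
Qed.

Lemma dts_moved_point : exists x, K x /\ ~ L x /\ L (phi x) /\ ~ par x (phi x).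
Proof.
  destruct Hphi as (HK & HLc & nKL & _ & _ & _ & Hx & _).
  assert (Hex : exists x, K x /\ ~ L x).
  { apply NNPP; intro N; apply nKL, circle_eq; auto.
    intros z Kz; apply NNPP; intro nLz; apply N; exists z; auto. }
  destruct Hex as [x [Kx nLx]].
  destruct (Hx x Kx) as [(_ & Lx & _)|(_ & _ & [T [(HT & Tx & _) HTL]])];
    [contradiction|].
  assert (Hsx : single (phi x) (phi x)) by reflexivity.
  rewrite <- HTL in Hsx; destruct Hsx as [Tsx Lsx].
  exists x; repeat split; auto.
  intro h; apply nLx; rewrite (circle_par_eq HT Tx Tsx h); exact Lsx.
Qed.

Lemma dts_fixes_generator a z : K a -> L a -> par a z -> phi z = z.
Proof.
  pose proof Hphi as (HK & HLc & _ & _ & Haut & Hinv & _ & Hcir).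
  intros Ka La paz.
  destruct dts_moved_point as [x (Kx & nLx & Lsx & npx)].
  assert (nx : phi x <> x) by (intro e; apply npx; rewrite e; apply par_refl).
  assert (sa : phi a = a) by exact (dts_fixes_inter Ka La).
  assert (nxz : ~ par x z).
  { intro h; apply nLx.
    rewrite (circle_par_eq HK Kx Ka (par_trans h (par_sym paz))); exact La. }
  assert (nsxz : ~ par (phi x) z).
  { intro h; apply nLx.
    pose proof (circle_par_eq HLc Lsx La (par_trans h (par_sym paz))) as e.
    rewrite <- (Hinv x), e, sa; exact La. }
  destruct (circle_through3 npx (fun h => nsxz h) nxz) as [N (HN & Nx & Nsx & Nz & _)].
  assert (Nsz : N (phi z)) by (rewrite <- (Hcir x N nx HN Nx Nsx); exists z; auto).
  pose proof (aut_par Haut paz) as psz; rewrite sa in psz.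
  exact (circle_par_eq HN Nsz Nz (par_trans (par_sym psz) paz)).
Qed.

Lemma laguerre_symmetry_of_dts : card2 (inter K L) -> laguerre_symmetry C par phi.
Proof.
  pose proof Hphi as (HK & _ & _ & _ & Haut & Hinv & _ & Hcir).
  intros [a [b [nab Hab]]].
  assert (Ha : inter K L a) by (rewrite Hab; left; reflexivity).
  assert (Hb : inter K L b) by (rewrite Hab; right; reflexivity).
  destruct Ha as [Ka La], Hb as [Kb Lb].
  split; [exact Haut|split; [exact Hinv|exists a, b; split; [|split]]].
  - intro e; apply generator_eq_par in e; exact (nab (circle_par_eq HK Ka Kb e)).
  - intros z [h|h];
      [apply (dts_fixes_generator (a := a))|apply (dts_fixes_generator (a := b))];
      assumption.
  - destruct dts_moved_point as [x (_ & _ & _ & npx)].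
    destruct (circle_through2 npx) as [N (HN & Nx & Nsx)].
    assert (nx : phi x <> x) by (intro e; apply npx; rewrite e; apply par_refl).
    exists N; split; [exact HN|split; [exact (Hcir x N nx HN Nx Nsx)|exists x; auto]].
Qed.

End DoubleTangency.
End LaguerrePlane.

(* Axioms (C) and (S) only make S_{K,L} exist and be unique. *)
Theorem theorem3p2 (P : Type) (C : (P -> Prop) -> Prop) (par : P -> P -> Prop)
  (HL : laguerre_plane C par) (HC : axiom_C C) (HS : axiom_S C par)
  (sigma : P -> P) (Hsigma : automorphism C sigma) :
  laguerre_symmetry C par sigma <->
  exists K L, C K /\ C L /\ card2 (inter K L) /\
    is_double_tangency_symmetry C K L sigma.
Proof.
  split.
  - exact (dts_of_laguerre_symmetry HL (s := sigma)).
  - intros (K & L & _ & _ & Hcard & Hdts).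
    exact (laguerre_symmetry_of_dts HL Hdts Hcard).
Qed.
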